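(* A graph $G$ admits a straight-line drawing with spanning ratio equal to $1$ if and only if $G$ contains a Hamiltonian path.
   Context: A drawing of a graph maps each vertex to a distinct point of the plane and each edge to a Jordan arc between its end-vertices; it is straight-line if every edge is drawn as the straight-line segment between its end-vertices (edges may pass through other vertices). In a straight-line drawing $\Gamma$, the length of a path is the sum of the Euclidean lengths of its edges, $\pi_\Gamma(u,v)$ is the minimum length of a path between $u$ and $v$, and $\|uv\|_\Gamma$ is the Euclidean distance between the points representing $u$ and $v$. The spanning ratio of $\Gamma$ is $\max_{u\neq v} \pi_\Gamma(u,v)/\|uv\|_\Gamma$ over all pairs of distinct vertices. *)

From HB Require Import structures.
From mathcomp Require Import all_boot all_order all_algebra.
From mathcomp Require Import all_classical all_reals ereal.
Set Implicit Arguments. Unset Strict Implicit. Unset Printing Implicit Defensive.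
Import Order.TTheory GRing.Theory Num.Theory.
Local Open Scope ring_scope.
Local Open Scope classical_set_scope.

Section Drawing.
Variables (R : realType) (V : finType).

Definition edist (p q : R * R) : R :=
  Num.sqrt ((p.1 - q.1) ^+ 2 + (p.2 - q.2) ^+ 2).

Definition drawing (f : V -> R * R) : Prop := injective f.

Fixpoint walk_len (f : V -> R * R) (x : V) (s : seq V) : R :=
  match s with
  | [::] => 0
  | y :: s' => edist (f x) (f y) + walk_len f y s'
  end.

(* pi_Gamma(u,v): minimum length of a path (walk) from u to v in g;
   +oo if there is none. *)
Definition graph_dist (g : rel V) (f : V -> R * R) (u v : V) : \bar R :=
  ereal_inf [set (walk_len f u s)%:E | s in [set s : seq V | path g u s && (last u s == v)]].

Definition spanning_ratio (g : rel V) (f : V -> R * R) : \bar R :=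
  ereal_sup [set (graph_dist g f uv.1 uv.2 * ((edist (f uv.1) (f uv.2))^-1)%:E)%E
            | uv in [set uv : V * V | uv.1 != uv.2]].

Definition hamiltonian_path (g : rel V) : Prop :=
  exists (x : V) (s : seq V),
    [/\ path g x s, uniq (x :: s) & size (x :: s) = #|V|].

End Drawing.

(* If the spanning ratio is 1, every graph distance equals the Euclidean
   distance.  Sort the vertices lexicographically by their points.  If two
   consecutive vertices x < y were not adjacent, every walk from x to y would
   start with an edge xw where f w is neither an endpoint nor lexicographically
   between f x and f y; since the points strictly inside the segment
   [f x, f y] are lexicographically between its endpoints, the triangle
   inequality through f w is strict, and as there are finitely many w the
   graph distance would exceed the Euclidean one.  So the sorted vertex list is
   a Hamiltonian path.  Conversely, drawing a Hamiltonian path at consecutive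
   integers on a line makes each subpath a geodesic. *)

From mathcomp Require Import all_boot all_order all_algebra.
From mathcomp Require Import all_classical all_reals ereal.
From mathcomp Require Import ring lra.
Import Order.TTheory GRing.Theory Num.Theory.
Local Open Scope ring_scope.

Lemma last_rev_belast {T : Type} (x : T) s : last (last x s) (rev (belast x s)) = x.
Proof.
rewrite -[LHS]/(last x (last x s :: rev (belast x s))).
by rewrite -rev_rcons -lastI rev_cons last_rcons.
Qed.

Lemma mem2_total {T : eqType} {s : seq T} {u v} :
  u \in s -> v \in s -> mem2 s u v || mem2 s v u.
Proof.
case/splitPr=> p1 p2; rewrite mem_cat => /orP[v_p1 | v_p2].
  by rewrite [X in _ || X]mem2_cat v_p1 mem_head !orbT.
by rewrite mem2_cat mem2_cons eqxx v_p2 orbT.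
Qed.

Lemma mem2_split {T : eqType} {s : seq T} {u v} :
  mem2 s u v -> exists p1 t r, s = p1 ++ u :: t ++ r /\ last u t = v.
Proof. by case/splitP2r=> p1 p2 /splitPl[t r last_t]; exists p1, t, r. Qed.

Lemma sorted_index {T : eqType} {s : seq T} :
  uniq s -> sorted (fun a b => index a s <= index b s)%N s.
Proof.
case: s => [//|x s'] s_uniq; set s := x :: s'.
rewrite -[X in sorted _ X](mkseq_nth x s) sorted_map.
apply: (@sub_in_sorted _ (gtn (size s)) leq) (iota_sorted 0 _) => [i j i_lt j_lt|].
  change (i <= j -> index (nth x s i) s <= index (nth x s j) s)%N.
  by rewrite !index_uniq.
by apply/allP => i; rewrite mem_iota.
Qed.

Lemma path_infix {T : Type} {e : rel T} {p1 u t r} :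
  sorted e (p1 ++ u :: t ++ r) -> path e u t.
Proof. by rewrite sorted_cat_cons cat_path => /andP[_ /andP[]]. Qed.

Lemma exists_uniform_gap {R : realType} {T : finType} {P : pred T} {F : T -> R} {a : R} :
  (forall w, P w -> a < F w) -> exists2 d, 0 < d & forall w, P w -> a + d <= F w.
Proof.
move=> aF; have [w0 Pw0 | P0] := pickP P; last by exists 1 => // w; rewrite P0.
case: (arg_minP F Pw0) => m Pm Fm.
by exists (F m - a); [rewrite subr_gt0 aF | move=> w Pw; rewrite addrC subrK Fm].
Qed.

Section Euclid.
Context {R : realType}.
Implicit Types p q r : R * R.

Lemma sqr_edist p q : edist p q ^+ 2 = (p.1 - q.1) ^+ 2 + (p.2 - q.2) ^+ 2.
Proof. by rewrite sqr_sqrtr // addr_ge0 ?sqr_ge0. Qed.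

Lemma edist_ge0 p q : 0 <= edist p q.
Proof. exact: sqrtr_ge0. Qed.

Lemma edist_gt0 p q : p != q -> 0 < edist p q.
Proof.
case: p q => [p1 p2] [q1 q2]; rewrite xpair_eqE negb_and => pq.
rewrite sqrtr_gt0 /=; case/orP: pq => pq.
  by rewrite ltr_pwDl ?sqr_ge0 // exprn_even_gt0 // subr_eq0.
by rewrite ltr_wpDl ?sqr_ge0 // exprn_even_gt0 // subr_eq0.
Qed.

Lemma edist_sym p q : edist p q = edist q p.
Proof. by rewrite /edist -sqrrN opprB -[(p.2 - _) ^+ 2]sqrrN opprB. Qed.

Lemma edistxx p : edist p p = 0.
Proof. by rewrite /edist !subrr expr0n addr0 sqrtr0. Qed.

Lemma lagrange_identity2 (a1 a2 b1 b2 : R) :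
  (a1 ^+ 2 + a2 ^+ 2) * (b1 ^+ 2 + b2 ^+ 2) =
  (a1 * b1 + a2 * b2) ^+ 2 + (a1 * b2 - a2 * b1) ^+ 2.
Proof. by ring. Qed.

Lemma le_of_sqr_le (x y : R) : 0 <= y -> x ^+ 2 <= y ^+ 2 -> x <= y.
Proof. by move=> y0 xy; nra. Qed.

Lemma sqr_edist_split p q r : edist p q ^+ 2 = edist p r ^+ 2 +
  ((p.1 - r.1) * (r.1 - q.1) + (p.2 - r.2) * (r.2 - q.2)) *+ 2 + edist r q ^+ 2.
Proof. by rewrite !sqr_edist; ring. Qed.

Lemma edist_triangle p q r : edist p q <= edist p r + edist r q.
Proof.
have a0 := edist_ge0 p r; have b0 := edist_ge0 r q.
have cs : (p.1 - r.1) * (r.1 - q.1) + (p.2 - r.2) * (r.2 - q.2) <= edist p r * edist r q.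
  apply: le_of_sqr_le; first exact: mulr_ge0.
  by rewrite exprMn !sqr_edist lagrange_identity2 lerDl sqr_ge0.
apply: le_of_sqr_le; first exact: addr_ge0.
by rewrite (sqr_edist_split p q r) sqrrD lerD2r lerD2l lerMn2r.
Qed.

Definition segment_point p q (t : R) : R * R :=
  (p.1 + t * (q.1 - p.1), p.2 + t * (q.2 - p.2)).

(* Equality in the triangle inequality is equality in Cauchy-Schwarz: the
   cross product of p - r and r - q vanishes, so b (p - r) = a (r - q). *)
Lemma edist_eq_segment p q r : r != p -> r != q ->
  edist p r + edist r q = edist p q ->
  exists2 t, 0 < t < 1 & r = segment_point p q t.
Proof.
move=> rp rq eq_pq.
have ea := sqr_edist p r; have eb := sqr_edist r q.
set a := edist p r in ea *; set b := edist r q in eb *.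
have a_gt0 : 0 < a by rewrite edist_gt0 // eq_sym.
have b_gt0 : 0 < b by rewrite edist_gt0.
set u1 := p.1 - r.1 in ea *; set u2 := p.2 - r.2 in ea *.
set v1 := r.1 - q.1 in eb *; set v2 := r.2 - q.2 in eb *.
have dot_eq : u1 * v1 + u2 * v2 = a * b.
  have := sqr_edist_split p q r; rewrite -eq_pq sqrrD => /addIr/addrI/eqP.
  by rewrite eqrMn2r => /eqP.
have cross_eq0 : u1 * v2 - u2 * v1 = 0.
  have := lagrange_identity2 u1 u2 v1 v2; rewrite -ea -eb -exprMn dot_eq.
  by rewrite -[LHS]addr0 => /addrI/esym/eqP; rewrite sqrf_eq0 => /eqP.
have par1 : b * u1 = a * v1.
  apply: (mulfI (lt0r_neq0 a_gt0)); apply/eqP; rewrite -subr_eq0.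
  have -> : a * (b * u1) - a * (a * v1) = u1 * (a * b) - v1 * a ^+ 2 by ring.
  by rewrite -dot_eq ea -[X in _ == X](mulr0 u2) -cross_eq0; apply/eqP; ring.
have par2 : b * u2 = a * v2.
  apply: (mulfI (lt0r_neq0 a_gt0)); apply/eqP; rewrite -subr_eq0.
  have -> : a * (b * u2) - a * (a * v2) = u2 * (a * b) - v2 * a ^+ 2 by ring.
  by rewrite -dot_eq ea -[X in _ == X](mulr0 u1) -oppr0 -cross_eq0; apply/eqP; ring.
have ab_neq0 : a + b != 0 by rewrite lt0r_neq0 ?addr_gt0.
exists (a / (a + b)).
  by rewrite divr_gt0 ?addr_gt0 //= ltr_pdivrMr ?addr_gt0 // mul1r ltrDl.
apply: injective_projections => /=; apply/(mulfI ab_neq0); apply/eqP;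
  rewrite mulrDr mulrA mulrCA divff // mulr1 -subr_eq0.
  have -> : (a + b) * r.1 - ((a + b) * p.1 + a * (q.1 - p.1)) = a * v1 - b * u1.
    by rewrite /u1 /v1; ring.
  by rewrite par1 subrr.
have -> : (a + b) * r.2 - ((a + b) * p.2 + a * (q.2 - p.2)) = a * v2 - b * u2.
  by rewrite /u2 /v2; ring.
by rewrite par2 subrr.
Qed.

Lemma segment_point_lexi_between p q t : ((p : R *l R) < q)%O -> 0 < t < 1 ->
  ((p : R *l R) < segment_point p q t)%O && ((segment_point p q t : R *l R) < q)%O.
Proof.
case: p q => [p1 p2] [q1 q2]; rewrite /segment_point !ltEprodlexi /=.
move=> /andP[le_pq1 /implyP lt_pq2] /andP[t_gt0 t_lt1].
move: le_pq1; rewrite le_eqVlt => /orP[/eqP eq_pq1 | lt_pq1].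
  have lt2 : p2 < q2 by apply: lt_pq2; rewrite eq_pq1.
  by rewrite eq_pq1 subrr mulr0 addr0 lexx /=; apply/andP; split; nra.
have lt1 : p1 < p1 + t * (q1 - p1) by nra.
have lt1' : p1 + t * (q1 - p1) < q1 by nra.
by rewrite (ltW lt1) (ltW lt1') (lt_geF lt1) (lt_geF lt1').
Qed.

Lemma edist_triangle_lexi_lt p q r : ((p : R *l R) < q)%O -> r != p -> r != q ->
  ~~ (((p : R *l R) < r)%O && ((r : R *l R) < q)%O) ->
  edist p q < edist p r + edist r q.
Proof.
move=> lt_pq rp rq not_between; rewrite lt_neqAle edist_triangle andbT.
apply: contraNneq not_between => /esym/(edist_eq_segment _ _ _ rp rq)[t t01 ->].
exact: segment_point_lexi_between.
Qed.

End Euclid.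

Section Walks.
Context {R : realType} {V : finType} (g : rel V) (f : V -> R * R).

Lemma walk_len_ge_edist x s : edist (f x) (f (last x s)) <= walk_len f x s.
Proof.
elim: s x => [|y s IH] x /=; first by rewrite edistxx.
by apply: le_trans (edist_triangle _ _ (f y)) _; rewrite lerD2l IH.
Qed.

Lemma walk_len_rcons x s y :
  walk_len f x (rcons s y) = walk_len f x s + edist (f (last x s)) (f y).
Proof. by elim: s x => [|z s IH] x /=; rewrite ?add0r ?addr0 // IH addrA. Qed.

Lemma walk_len_rev x s : walk_len f (last x s) (rev (belast x s)) = walk_len f x s.
Proof.
elim: s x => [|y s IH] x //=.
by rewrite rev_cons walk_len_rcons IH last_rev_belast edist_sym addrC.
Qed.

Lemma graph_dist_ge_edist u v : ((edist (f u) (f v))%:E <= graph_dist g f u v)%E.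
Proof.
apply: le_ereal_inf_tmp => _ [s /andP[_ /eqP <-] <-].
by rewrite lee_fin walk_len_ge_edist.
Qed.

Lemma graph_dist_le_walk u t :
  path g u t -> (graph_dist g f u (last u t) <= (walk_len f u t)%:E)%E.
Proof.
move=> gut; apply: ge_ereal_inf; exists (walk_len f u t)%:E => //.
by exists t => //=; rewrite gut eqxx.
Qed.

Lemma graph_dist_sym u v : symmetric g -> graph_dist g f u v = graph_dist g f v u.
Proof.
move=> g_sym; wlog suff : u v / (graph_dist g f v u <= graph_dist g f u v)%E.
  by move=> le_dist; apply/le_anti; rewrite !le_dist.
apply: le_ereal_inf_tmp => _ [s /andP[gus /eqP <-] <-].
rewrite -walk_len_rev -[X in graph_dist _ _ _ X](last_rev_belast u s).
apply: graph_dist_le_walk; rewrite rev_path.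
by rewrite (@eq_path _ _ g) // => ? ?; apply: g_sym.
Qed.

Lemma graph_dist_walk_edist u t : path g u t ->
  walk_len f u t = edist (f u) (f (last u t)) ->
  graph_dist g f u (last u t) = (edist (f u) (f (last u t)))%:E.
Proof.
move=> gut len_t; apply/le_anti; rewrite graph_dist_ge_edist andbT -len_t.
exact: graph_dist_le_walk.
Qed.

Lemma edist_lt_graph_dist x y : x != y ->
  (forall w, g x w -> edist (f x) (f y) < edist (f x) (f w) + edist (f w) (f y)) ->
  ((edist (f x) (f y))%:E < graph_dist g f x y)%E.
Proof.
move=> xy detour; have [d d_gt0 gap] := exists_uniform_gap detour.
apply: (@lt_le_trans _ _ (edist (f x) (f y) + d)%:E); first by rewrite lte_fin ltrDl.
apply: le_ereal_inf_tmp => _ [[|w s] /andP[/= gxs /eqP last_s] <-].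
  by move: xy; rewrite -last_s eqxx.
case/andP: gxs => gxw gws; rewrite lee_fin /=; apply: le_trans (gap w gxw) _.
by rewrite lerD2l -last_s walk_len_ge_edist.
Qed.

End Walks.

Lemma spanning_ratio_eq1P {R : realType} {V : finType} (g : rel V) (f : V -> R * R) :
  injective f -> (1 < #|V|)%N ->
  spanning_ratio g f = 1%E <->
  forall u v, u != v -> graph_dist g f u v = (edist (f u) (f v))%:E.
Proof.
move=> f_inj V2; have edist_gt0 u v : u != v -> 0 < edist (f u) (f v).
  by move=> uv; rewrite edist_gt0 // inj_eq.
split=> [ratio1 u v uv | dist_eq].
  apply/le_anti; rewrite graph_dist_ge_edist andbT.
  rewrite -[leRHS]mul1e -lee_pdivrMr ?edist_gt0 //.
  by rewrite -ratio1; apply: ereal_sup_ubound; exists (u, v).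
have [u [v [_ _ uv]]] := card_gt1P V2.
rewrite /spanning_ratio -[RHS]ereal_sup1; congr ereal_sup.
apply/seteqP; split => [_ [[u' v'] /= u'v' <-] | _ ->] /=.
  by rewrite dist_eq // -EFinM divff // gt_eqF ?edist_gt0.
by exists (u, v) => //=; rewrite dist_eq // -EFinM divff // gt_eqF ?edist_gt0.
Qed.

Section LexiCovers.
Context {V : finType} (g : rel V) {disp : Order.disp_t} {T : orderType disp} (f : V -> T).
Hypothesis f_inj : injective f.
Hypothesis covers_adjacent : forall x y, (f x < f y)%O ->
  (forall w, ~~ ((f x < f w)%O && (f w < f y)%O)) -> g x y.

Lemma path_of_covers x s : path (relpre f <%O) x s ->
  (forall w, (f x < f w)%O -> w \in s) -> path g x s.
Proof.
have lt_f_trans : transitive (relpre f <%O) by move=> ? ? ?; apply: lt_trans.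
elim: s x => [|y s IH] x //= /andP[lt_xy lt_ys] above_x; apply/andP; split.
  apply: covers_adjacent lt_xy _ => w; apply/negP => /andP[lt_xw lt_wy].
  move: (above_x w lt_xw); rewrite inE => /orP[/eqP eq_wy | ws].
    by move: lt_wy; rewrite eq_wy ltxx.
  have lt_yw := allP (order_path_min lt_f_trans lt_ys) w ws.
  by move: (lt_trans lt_wy lt_yw); rewrite ltxx.
apply: IH lt_ys _ => w lt_yw.
move: (above_x w (lt_trans lt_xy lt_yw)); rewrite inE => /orP[/eqP eq_wy | //].
by move: lt_yw; rewrite eq_wy ltxx.
Qed.

Lemma hamiltonian_path_of_covers : (0 < #|V|)%N -> hamiltonian_path g.
Proof.
move=> V_gt0; pose s := sort (relpre f <=%O) (enum V).
have sorted_s : sorted (relpre f <%O) s.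
  by rewrite -sorted_map -sort_map sort_lt_sorted (map_inj_uniq f_inj) enum_uniq.
have mem_s w : w \in s by rewrite mem_sort mem_enum.
have uniq_s : uniq s by rewrite sort_uniq enum_uniq.
have size_s : size s = #|V| by rewrite size_sort cardE.
move: s sorted_s mem_s uniq_s size_s => [|x s] /= sorted_s mem_s uniq_s size_s.
  by rewrite -size_s in V_gt0.
exists x, s; split => //; apply: path_of_covers sorted_s _ => w lt_xw.
move: (mem_s w); rewrite inE => /orP[/eqP eq_wx | //].
by move: lt_xw; rewrite eq_wx ltxx.
Qed.

End LexiCovers.

Lemma lexi_covers_adjacent {R : realType} {V : finType} (g : rel V) (f : V -> R * R) :
  irreflexive g -> injective f ->
  (forall u v, u != v -> graph_dist g f u v = (edist (f u) (f v))%:E) ->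
  forall x y, ((f x : R *l R) < f y)%O ->
  (forall w, ~~ (((f x : R *l R) < f w)%O && ((f w : R *l R) < f y)%O)) -> g x y.
Proof.
move=> g_irr f_inj dist_eq x y lt_xy not_between; apply: contraT => not_gxy.
have xy : x != y by apply: contraTneq lt_xy => ->; rewrite ltxx.
have := edist_lt_graph_dist g f x y xy; rewrite dist_eq // ltxx; apply=> w gxw.
apply: edist_triangle_lexi_lt lt_xy _ _ (not_between w); rewrite inj_eq //.
  by apply: contraTneq gxw => ->; rewrite g_irr.
by apply: contraNneq not_gxy => <-.
Qed.

Section LineDrawing.
Context {R : realType} {V : finType}.

Definition on_line (p : V -> R) (w : V) : R * R := (p w, 0).

Lemma edist_on_line p u v : edist (on_line p u) (on_line p v) = `|p u - p v|.
Proof. by rewrite /edist /= subrr expr0n addr0 sqrtr_sqr. Qed.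

Lemma walk_len_on_line p x s : path (relpre p <=%R) x s ->
  walk_len (on_line p) x s = edist (on_line p x) (on_line p (last x s)).
Proof.
have le_last y t : path (relpre p <=%R) y t -> p y <= p (last y t).
  by elim: t y => [|z t IH] y //= /andP[le_yz /IH]; apply: le_trans.
elim: s x => [|y s IH] x /=; first by rewrite edistxx.
case/andP=> le_xy path_ys; rewrite IH // !edist_on_line.
have le_xlast := le_trans le_xy (le_last _ _ path_ys).
rewrite !ler0_norm ?subr_le0 ?le_last //.
by rewrite -opprD addrA subrK.
Qed.

Definition index_line (L : seq V) : V -> R * R :=
  on_line (fun w => (index w L)%:R).

Lemma index_line_inj {L : seq V} : (forall w, w \in L) -> injective (index_line L).
Proof.
move=> L_all u v [/eqP]; rewrite eqr_nat => /eqP.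
exact: index_inj (L_all u) (L_all v).
Qed.

Lemma graph_dist_index_line (g : rel V) (L : seq V) : symmetric g -> sorted g L ->
  uniq L -> (forall w, w \in L) ->
  forall u v,
  graph_dist g (index_line L) u v = (edist (index_line L u) (index_line L v))%:E.
Proof.
move=> g_sym L_sorted L_uniq L_all u v.
wlog uv : u v / mem2 L u v.
  move=> forward; case/orP: (mem2_total (L_all u) (L_all v)) => [/forward // | /forward].
  by rewrite graph_dist_sym // edist_sym.
have [p1 [t [r [L_eq <-]]]] := mem2_split uv.
apply: graph_dist_walk_edist; first by move: L_sorted; rewrite L_eq => /path_infix.
apply: walk_len_on_line.
apply: sub_path (_ : path (fun a b => index a L <= index b L)%N u t).
  by move=> a b; rewrite /= ler_nat.
by move: (sorted_index L_uniq); rewrite [X in sorted _ X]L_eq => /path_infix.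
Qed.

End LineDrawing.

Theorem lemma1 (R : realType) (V : finType) (g : rel V) :
  symmetric g -> irreflexive g -> (1 < #|V|)%N ->
  ((exists f : V -> R * R, drawing f /\ spanning_ratio g f = 1%E)
   <-> hamiltonian_path g).
Proof.
move=> g_sym g_irr V_gt1; split=> [[f [f_inj ratio1]] | [x [s [g_path s_uniq s_size]]]].
  have dist_eq := (spanning_ratio_eq1P g f f_inj V_gt1).1 ratio1.
  apply: (hamiltonian_path_of_covers g (f : V -> R *l R) f_inj); last exact: ltnW.
  exact: lexi_covers_adjacent.
have s_all w : w \in x :: s.
  have /subset_cardP all_s : #|x :: s| = #|V| by rewrite (card_uniqP s_uniq).
  by rewrite (all_s (subset_predT _)).
pose f : V -> R * R := index_line (x :: s).
have f_inj : injective f := index_line_inj s_all.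
exists f; split => //; apply/(spanning_ratio_eq1P g f f_inj V_gt1) => u v _.
exact: graph_dist_index_line.
Qed.
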